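(* A tree $T$ satisfies $D(T)=\dim(T)+1$ if and only if $T$ is isomorphic to $P_n$ or to $K_{1,n}$ for some $n\ge 2$.
   Context: All graphs are finite and simple; $P_n$ is the path on $n$ vertices and $K_{1,n}$ the star with $n$ leaves. For a connected graph $G$ with shortest-path distance $d_G$, a set $S\subseteq V(G)$ is resolving if for any two distinct vertices $x,y$ there is $s\in S$ with $d_G(x,s)\neq d_G(y,s)$; the metric dimension $\dim(G)$ is the minimum size of a resolving set. A distinguishing coloring of a graph $G$ is a (not necessarily proper) vertex coloring such that the only automorphism of $G$ mapping every vertex to a vertex of the same color is the identity; the distinguishing number $D(G)$ is the minimum number of colors in a distinguishing coloring of $G$. *)

From mathcomp Require Import all_boot fingroup perm.
Set Implicit Arguments. Unset Strict Implicit. Unset Printing Implicit Defensive.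

Section Graphs.
Variables (T : finType) (e : rel T).

Definition simple_graph : Prop := symmetric e /\ irreflexive e.

Definition connected_graph : Prop := forall x y : T, connect e x y.

Definition acyclic_graph : Prop :=
  forall c : seq T, uniq c -> 3 <= size c -> ~~ path.cycle e c.

Definition is_tree : Prop := simple_graph /\ connected_graph /\ acyclic_graph.

Definition walk_of_len (x y : T) (n : nat) : bool :=
  [exists p : n.-tuple T, path e x p && (last x p == y)].

(* shortest-path distance d_G(x,y) (equals #|T| if no walk, irrelevant for
   connected graphs since a shortest walk has length < #|T|) *)
Definition dist (x y : T) : nat := find (walk_of_len x y) (iota 0 #|T|).

Definition resolving (S : {set T}) : bool :=
  [forall x, forall y, (x != y) ==> [exists s in S, dist x s != dist y s]].

(* metric dimension: minimum size of a resolving set (setT is resolving in a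
   connected graph, so the default value #|T| is never the strict minimum) *)
Definition metric_dim : nat :=
  \big[minn/#|T|]_(S : {set T} | resolving S) #|S|.

Definition is_automorphism (s : {perm T}) : bool :=
  [forall x, forall y, e x y == e (s x) (s y)].

Definition distinguishing (k : nat) (c : {ffun T -> 'I_k}) : bool :=
  [forall s : {perm T},
     (is_automorphism s && [forall x, c (s x) == c x]) ==> (s == 1%g)].

(* distinguishing number: least k with a distinguishing k-coloring
   (k = #|T| always works via an injective coloring) *)
Definition distinguishing_number : nat :=
  \big[minn/#|T|]_(k < #|T|.+1 | [exists c : {ffun T -> 'I_k}, distinguishing c]) k.

End Graphs.

Definition graph_iso (T U : finType) (e : rel T) (f : rel U) : Prop :=
  exists g : T -> U, bijective g /\ forall x y, e x y = f (g x) (g y).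

Definition path_rel (n : nat) : rel 'I_n :=
  fun i j => (i.+1 == j :> nat) || (j.+1 == i :> nat).

Definition star_rel (n : nat) : rel 'I_n.+1 :=
  fun i j => (i == ord0) != (j == ord0).

(* A resolving set is fixed pointwise only by the identity automorphism, so
   colouring a metric basis injectively and everything else with one more
   colour is distinguishing: D <= dim + 1 in every connected graph, with
   equality for paths (dim 1, D 2) and stars K_{1,n} (dim n - 1, D n).

   Conversely let W be a metric basis of a tree with |W| = m + 2 and assume no
   colouring with m + 2 colours is distinguishing. Colouring W minus one vertex
   w injectively yields nontrivial automorphisms fixing W - w; comparing two of
   them shows that w is a leaf and that its support vertex q carries a second
   leaf (or the tree is a single edge). As W resolves, a vertex carries at most
   one leaf outside W. If some vertex carries more than m + 2 leaves, it is
   adjacent to every other vertex. Otherwise the vertices carrying two or more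
   leaves ("hubs") are at most |W| many, and colouring the hubs injectively and
   the leaves at each hub injectively is distinguishing with m + 2 colours, a
   contradiction. A metric basis of size 1 makes the tree a path. *)

From mathcomp Require Import all_boot fingroup perm zify.
Set Implicit Arguments. Unset Strict Implicit. Unset Printing Implicit Defensive.

Section BigMin.
Variables (I : finType) (P : pred I) (F : I -> nat) (d : nat).

Lemma bigmin_le i : P i -> \big[minn/d]_(j | P j) F j <= F i.
Proof.
move=> Pi; rewrite -big_filter.
have : i \in [seq j <- index_enum I | P j] by rewrite mem_filter Pi mem_index_enum.
elim: [seq j <- _ | _] => // j s IH; rewrite in_cons big_cons => /orP[/eqP<-|/IH h].
  exact: geq_minl.
exact: leq_trans (geq_minr _ _) h.
Qed.

Lemma bigmin_ge m : m <= d -> (forall i, P i -> m <= F i) ->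
  m <= \big[minn/d]_(j | P j) F j.
Proof.
move=> hd hF; elim/big_ind: _ => //.
by move=> x y hx hy; rewrite leq_min hx hy.
Qed.

Lemma bigmin_attained :
  \big[minn/d]_(j | P j) F j = d \/ exists2 i, P i & \big[minn/d]_(j | P j) F j = F i.
Proof.
elim/big_ind: _; first by left.
  by move=> x y hx hy; case: (leqP x y).
by move=> i Pi; right; exists i.
Qed.

End BigMin.

Section Codes.
Variables (T : finType) (A : {set T}) (n : nat).

Definition index_code x : 'I_n.+1 := inord (index x (enum A)).

Definition set_code x : 'I_n.+1 :=
  if x \in A then inord (index x (enum A)).+1 else ord0.

Lemma index_enum_lt x : x \in A -> index x (enum A) < #|A|.
Proof. by rewrite cardE index_mem mem_enum. Qed.

Lemma index_code_inj : #|A| <= n.+1 -> {in A &, injective index_code}.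
Proof.
move=> hA x y hx hy /(congr1 val); rewrite /= !inordK.
- by move=> h; apply: (index_inj x _ _ h); rewrite mem_enum.
- exact: leq_trans (index_enum_lt hy) hA.
- exact: leq_trans (index_enum_lt hx) hA.
Qed.

Hypothesis cardA : #|A| <= n.

Lemma set_code_in b : b \in A -> (set_code b : nat) = (index b (enum A)).+1.
Proof.
by move=> hb; rewrite /set_code hb inordK // ltnS (leq_trans (index_enum_lt hb)).
Qed.

Lemma set_code_inj b x : b \in A -> set_code x = set_code b -> x = b.
Proof.
move=> hb; case hx: (x \in A).
  move/(congr1 val); rewrite /= !set_code_in // => -[] h.
  by apply: (index_inj x _ _ h); rewrite mem_enum.
by rewrite {1}/set_code hx => /(congr1 val); rewrite /= set_code_in.
Qed.

End Codes.

Section Walks.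
Variables (T : finType) (e : rel T).

Lemma walkP x y n :
  reflect (exists p : seq T, [/\ size p = n, path e x p & last x p = y])
    (walk_of_len e x y n).
Proof.
apply: (iffP existsP) => [[p /andP[hp /eqP hl]]|[p [hs hp hl]]].
  by exists (val p); rewrite size_tuple.
have hs' : size p == n by rewrite hs.
by exists (Tuple hs'); rewrite /= hp hl eqxx.
Qed.

Lemma walk_nil x : walk_of_len e x x 0.
Proof. by apply/walkP; exists [::]. Qed.

Lemma walk_nil_eq x y : walk_of_len e x y 0 -> x = y.
Proof. by case/walkP=> [[|a p] [hs _ hl]]. Qed.

Lemma walk_cons x z y n : e x z -> walk_of_len e z y n -> walk_of_len e x y n.+1.
Proof.
move=> hxz /walkP[p [hs hp hl]]; apply/walkP; exists (z :: p).
by rewrite /= hs hxz hp hl.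
Qed.

Lemma walk_edge x y : e x y -> walk_of_len e x y 1.
Proof. by move=> h; apply: walk_cons h (walk_nil _). Qed.

Lemma walk_cat x y z m n : walk_of_len e x y m -> walk_of_len e y z n ->
  walk_of_len e x z (m + n).
Proof.
move=> /walkP[p [hs hp hl]] /walkP[q [hs' hq hl']]; apply/walkP; exists (p ++ q).
by rewrite size_cat cat_path last_cat hl hs hs' hp hq.
Qed.

Lemma dist_le x y n : walk_of_len e x y n -> dist e x y <= n.
Proof.
move=> hw; rewrite /dist; case: (ltnP n #|T|) => hn.
  case: (leqP (find (walk_of_len e x y) (iota 0 #|T|)) n) => // hlt.
  by have := before_find 0 hlt; rewrite nth_iota // hw.
by apply: leq_trans (find_size _ _) _; rewrite size_iota.
Qed.

Lemma dist_walk_of_lt x y n : walk_of_len e x y n -> n < #|T| ->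
  walk_of_len e x y (dist e x y).
Proof.
move=> hw hn.
have hh : has (walk_of_len e x y) (iota 0 #|T|).
  by apply/hasP; exists n => //; rewrite mem_iota.
have hi : find (walk_of_len e x y) (iota 0 #|T|) < #|T|.
  by rewrite -{2}(size_iota 0 #|T|) -has_find.
by have := nth_find 0 hh; rewrite nth_iota.
Qed.

Lemma dist0 x : dist e x x = 0.
Proof. by apply/eqP; rewrite -leqn0; apply: dist_le; apply: walk_nil. Qed.

Lemma dist_eq0 x y : dist e x y = 0 -> x = y.
Proof.
move=> h; have hT : 0 < #|T| by apply/card_gt0P; exists x.
have hh : has (walk_of_len e x y) (iota 0 #|T|) by rewrite has_find -/(dist e x y) h size_iota.
by have := nth_find 0 hh; rewrite -/(dist e x y) h nth_iota // => /walk_nil_eq.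
Qed.

Lemma dist_eq0P x y : (dist e x y == 0) = (x == y).
Proof. by apply/eqP/eqP => [/dist_eq0 //|->]; exact: dist0. Qed.

Lemma dist_gt0 x y : x != y -> 0 < dist e x y.
Proof. by rewrite lt0n dist_eq0P. Qed.

Lemma walk_suffix x p y : path e x p -> y \in p ->
  exists2 n, n < size p & walk_of_len e y (last x p) n.
Proof.
move=> hp hy; move: hp; case/splitPr: hy => p1 p2.
rewrite cat_path last_cat /= => /andP[_ /andP[_ hp2]].
exists (size p2); first by rewrite size_cat /= addnS ltnS leq_addl.
by apply/walkP; exists p2.
Qed.

Lemma walk_prefix x p y : path e x p -> y \in p -> y != last x p ->
  exists2 n, n < size p & walk_of_len e x y n.
Proof.
move=> hp hy0; move: hp; case/splitPr: hy0 => p1 p2.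
rewrite cat_path last_cat /= => /andP[hp1 /andP[hy _]] hl.
exists (size p1).+1.
  case: p2 hl => [|z p2] hl; first by rewrite eqxx in hl.
  by rewrite size_cat /= addnS ltnS -addSnnS leq_addr.
by apply/walkP; exists (rcons p1 y); rewrite size_rcons rcons_path hp1 hy last_rcons.
Qed.

Hypothesis conn : connected_graph e.

Lemma walk_short x y : exists2 n, n < #|T| & walk_of_len e x y n.
Proof.
have /connectP[p hp hl] := conn x y.
rewrite hl; case: (shortenP hp) => p' hp' hu _.
exists (size p'); last by apply/walkP; exists p'.
by have := max_card (mem (x :: p')); rewrite (card_uniqP hu).
Qed.

Lemma dist_walk x y : walk_of_len e x y (dist e x y).
Proof. by have [n hn hw] := walk_short x y; exact: dist_walk_of_lt hw hn. Qed.

Lemma dist_lt x y : dist e x y < #|T|.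
Proof. by have [n hn hw] := walk_short x y; exact: leq_ltn_trans (dist_le hw) hn. Qed.

Lemma dist_tri x y z : dist e x z <= dist e x y + dist e y z.
Proof. by apply: dist_le; apply: walk_cat; exact: dist_walk. Qed.

Lemma dist_edge_le x y : e x y -> dist e x y <= 1.
Proof. by move=> h; apply: dist_le; apply: walk_edge. Qed.

Lemma dist_edge_leS x y z : e x y -> dist e x z <= (dist e y z).+1.
Proof.
by move=> h; apply: leq_trans (dist_tri x y z) _; rewrite -add1n leq_add2r dist_edge_le.
Qed.

Lemma dist_step x y : x != y -> exists2 z, e x z & dist e z y = (dist e x y).-1.
Proof.
move=> hxy; have /walkP[[|z p] [hs hp hl]] := dist_walk x y.
  by move: hxy; rewrite -hl /= eqxx.
case/andP: hp => hxz hp; exists z => //.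
apply/eqP; rewrite eqn_leq; apply/andP; split.
  by apply: dist_le; apply/walkP; exists p; rewrite -hs.
by rewrite -ltnS (ltn_predK (dist_gt0 hxy)) dist_edge_leS.
Qed.

Lemma connected_closed_setT (S : {set T}) x0 : x0 \in S ->
  (forall u v, u \in S -> e u v -> v \in S) -> forall x, x \in S.
Proof.
move=> h0 hcl x; have /connectP[p hp ->] := conn x0 x.
elim: p x0 h0 hp => //= y p IH x0 h0 /andP[h1 h2].
exact: IH (hcl _ _ h0 h1) h2.
Qed.

Hypothesis sym_e : symmetric e.

Lemma walk_sym x y n : walk_of_len e x y n -> walk_of_len e y x n.
Proof.
case/walkP=> p [hs hp hl]; apply/walkP; exists (rev (belast x p)); split.
- by rewrite size_rev size_belast.
- by rewrite -hl rev_path; apply: sub_path hp => a b; rewrite sym_e.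
- have h : last x p :: rev (belast x p) = rcons (rev p) x.
    by rewrite -rev_rcons -lastI rev_cons.
  by rewrite -hl -[last _ _](last_cons x) h last_rcons.
Qed.

Lemma dist_sym x y : dist e x y = dist e y x.
Proof.
by apply/eqP; rewrite eqn_leq; apply/andP; split; apply: dist_le; apply: walk_sym;
  exact: dist_walk.
Qed.

End Walks.

Section Automorphisms.
Variables (T : finType) (e : rel T).

Definition deg x := #|[set y | e x y]|.

Definition fixes (s : {perm T}) (A : {set T}) := forall b, b \in A -> s b = b.

Lemma aut_edge (s : {perm T}) x y : is_automorphism e s -> e (s x) (s y) = e x y.
Proof. by move=> /forallP ha; rewrite (eqP (forallP (ha x) y)). Qed.

Lemma aut_inv (s : {perm T}) : is_automorphism e s -> is_automorphism e (s^-1)%g.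
Proof.
move=> ha; apply/forallP => x; apply/forallP => y.
by rewrite -[e (_ x) _](aut_edge _ _ ha) !permKV.
Qed.

Lemma aut_mul (s t : {perm T}) : is_automorphism e s -> is_automorphism e t ->
  is_automorphism e (s * t)%g.
Proof.
move=> hs ht; apply/forallP => x; apply/forallP => y.
by rewrite !permM (aut_edge _ _ ht) (aut_edge _ _ hs).
Qed.

Lemma aut_walk (s : {perm T}) x y n : is_automorphism e s ->
  walk_of_len e x y n -> walk_of_len e (s x) (s y) n.
Proof.
move=> ha /walkP[p [hs hp hl]]; apply/walkP; exists (map s p); split.
- by rewrite size_map.
- by elim: p x hp {hs hl} => //= z p IH x /andP[hxz hp]; rewrite aut_edge // hxz IH.
- by rewrite -hl last_map.
Qed.

Lemma aut_walkE (s : {perm T}) x y n : is_automorphism e s ->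
  walk_of_len e (s x) (s y) n = walk_of_len e x y n.
Proof.
move=> ha; apply/idP/idP; last exact: aut_walk.
by move/(aut_walk (aut_inv ha)); rewrite !permK.
Qed.

Lemma aut_dist (s : {perm T}) x y : is_automorphism e s ->
  dist e (s x) (s y) = dist e x y.
Proof. by move=> ha; rewrite /dist; apply: eq_find => n; rewrite aut_walkE. Qed.

Lemma aut_card_nbr (s : {perm T}) (P : pred T) p : is_automorphism e s ->
  (forall x, P (s x) = P x) ->
  #|[set u | e (s p) u && P u]| = #|[set u | e p u && P u]|.
Proof.
move=> ha hP; rewrite -[RHS](card_imset _ (@perm_inj _ s)); apply: eq_card => y.
rewrite inE; apply/idP/imsetP => [h|[z]].
  exists ((s^-1)%g y); last by rewrite permKV.
  by rewrite inE -(aut_edge p _ ha) -hP !permKV.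
by rewrite inE => hz ->; rewrite aut_edge // hP.
Qed.

Lemma aut_deg (s : {perm T}) x : is_automorphism e s -> deg (s x) = deg x.
Proof.
move=> ha; have := aut_card_nbr x (P := predT) ha (fun _ => erefl).
by rewrite /deg; under eq_finset do rewrite andbT; under [in RHS]eq_finset do rewrite andbT.
Qed.

Lemma aut_fix_resolving (s : {perm T}) S : is_automorphism e s -> resolving e S ->
  fixes s S -> s = 1%g.
Proof.
move=> ha /forallP hr hS; apply/permP => x; rewrite perm1.
apply/eqP; apply/negPn/negP => hne.
have /existsP[z /andP[hz]] := implyP (forallP (hr (s x)) x) hne.
by rewrite -{1}(hS z hz) aut_dist // eqxx.
Qed.

Lemma fixes_conj (r t : {perm T}) (A : {set T}) :
  fixes r A -> fixes t A -> fixes (r * t * r^-1)%g A.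
Proof. by move=> hr ht b hb; rewrite !permM hr // ht // -{1}(hr b hb) permK. Qed.

End Automorphisms.

Section Leaves.
Variables (T : finType) (e : rel T).
Hypotheses (conn : connected_graph e) (sym_e : symmetric e) (irr_e : irreflexive e).

Definition leaf_nbrs p := [set u | e p u && (deg e u == 1)].

Definition hubs := [set p | 1 < #|leaf_nbrs p|].

Lemma hub_deg p : p \in hubs -> deg e p != 1.
Proof.
rewrite inE => hp; rewrite neq_ltn orbC (leq_trans hp) //.
by apply: subset_leq_card; apply/subsetP => u; rewrite !inE => /andP[].
Qed.

Lemma leaf_nbrE x q : deg e x = 1 -> e x q -> forall y, e x y = (y == q).
Proof.
move=> /eqP/cards1P[q' hq'] hq y.
have hy z : e x z = (z == q') by rewrite -[e x z]in_set hq' inE.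
by move: hq; rewrite !hy => /eqP ->.
Qed.

Lemma deg_gt0 x y : x != y -> 0 < deg e x.
Proof.
by move=> hxy; have [z hz _] := dist_step conn hxy; apply/card_gt0P; exists z; rewrite inE.
Qed.

Lemma dist_edge1 x y : e x y -> dist e x y = 1.
Proof.
move=> h; apply/eqP; rewrite eqn_leq dist_edge_le // dist_gt0 //.
by apply: contraTneq h => ->; rewrite irr_e.
Qed.

Lemma dist_leaf u p x : deg e u = 1 -> e u p -> x != u ->
  dist e x u = (dist e x p).+1.
Proof.
move=> hu hup hxu; rewrite !(dist_sym conn sym_e x); apply/eqP; rewrite eqn_leq.
rewrite (dist_edge_leS conn _ hup) /=.
have hux : u != x by rewrite eq_sym.
have [z hz hzd] := dist_step conn hux.
have -> : p = z by apply/eqP; rewrite eq_sym -(leaf_nbrE hu hup).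
by rewrite hzd (ltn_predK (dist_gt0 e hux)).
Qed.

Lemma leaf_nbrs_dist u v b p : u \in leaf_nbrs p -> v \in leaf_nbrs p ->
  b != u -> b != v -> dist e u b = dist e v b.
Proof.
rewrite !inE => /andP[hpu /eqP hu] /andP[hpv /eqP hv] hbu hbv.
have hup : e u p by rewrite sym_e.
have hvp : e v p by rewrite sym_e.
by rewrite !(dist_sym conn sym_e _ b) (dist_leaf hu hup hbu) (dist_leaf hv hvp hbv).
Qed.

(* Leaves at the same vertex are twins: only a leaf itself can tell them apart. *)
Lemma leaf_nbrs_resolving (W : {set T}) p : resolving e W ->
  #|leaf_nbrs p :\: W| <= 1.
Proof.
move=> /forallP hres; apply/card_le1P => u hu v.
apply/idP/idP => [hv|/eqP -> //]; rewrite inE; apply/negPn/negP => hvu.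
move: hu hv; rewrite !in_setD => /andP[huW huL] /andP[hvW hvL].
have /existsP[b /andP[hb hd]] := implyP (forallP (hres v) u) hvu.
move: hd; rewrite (leaf_nbrs_dist hvL huL) ?eqxx //.
  by apply: contraNneq hvW => <-.
by apply: contraNneq huW => <-.
Qed.

Lemma pick_hub_of_leaf x q : deg e x = 1 -> e x q -> q \in hubs ->
  [pick p in hubs | e x p] = Some q.
Proof.
move=> hx1 hxq hq; case: pickP => [p /andP[_ hxp]|hn].
  by rewrite (leaf_nbrE hx1 hxq) in hxp; rewrite (eqP hxp).
by have := hn q; rewrite hq hxq.
Qed.

(* Each hub carries a leaf of [W], and a leaf determines its hub. *)
Lemma card_hubs_resolving (W : {set T}) : resolving e W -> #|hubs| <= #|W|.
Proof.
move=> resW; pose nbr x := odflt x [pick y | e x y].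
apply: leq_trans (leq_imset_card nbr W); apply: subset_leq_card.
apply/subsetP => p; rewrite inE => hp.
have : 0 < #|leaf_nbrs p :&: W|.
  move: hp; rewrite -(cardsID W (leaf_nbrs p)) lt0n.
  by case: eqP => [-> /leq_trans/(_ (leaf_nbrs_resolving p resW))|//]; rewrite ltnn.
case/card_gt0P => u; rewrite !inE => /andP[/andP[hpu /eqP hu] huW].
apply/imsetP; exists u => //; rewrite /nbr; case: pickP => [y hy|hn] /=.
  have hup : e u p by rewrite sym_e.
  by rewrite (leaf_nbrE hu hup) in hy; rewrite (eqP hy).
by have := hn p; rewrite sym_e hpu.
Qed.

End Leaves.

Section Trees.
Variables (T : finType) (e : rel T).
Hypothesis tree : is_tree e.

Let sym_e : symmetric e. Proof. by case: tree => [[]]. Qed.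
Let irr_e : irreflexive e. Proof. by case: tree => [[]]. Qed.
Let conn : connected_graph e. Proof. by case: tree => _ []. Qed.
Let acyc : acyclic_graph e. Proof. by case: tree => _ []. Qed.

Lemma tree_nbr_path_mem v u1 u2 p : e v u1 -> e v u2 -> u1 != u2 ->
  path e u1 p -> last u1 p = u2 -> v \in u1 :: p.
Proof.
move=> h1 h2 hne hp hl; apply/negPn/negP => hv.
move: hl; case: (shortenP hp) => p' hp' hu hsub hl.
have hvu1 : v != u1 by apply: contraTneq h1 => ->; rewrite irr_e.
have hvp' : v \notin p' by apply: contra hv => /hsub; rewrite inE => ->; rewrite orbT.
apply: (negP (acyc (c := v :: u1 :: p') _ _)).
- by rewrite cons_uniq inE negb_or hvu1 hvp' hu.
- by case: p' {hp' hu hsub hvp'} hl => [|z p'] hl //=; move: hne; rewrite -hl eqxx.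
- by rewrite /= h1 rcons_path hp' hl sym_e h2.
Qed.

(* The unique [a]-[b] path runs through [v], so a shortest walk from [a] to [x]
   followed by one from [x] to [b] meets [v]. *)
Lemma tree_nbrs_farther v a b x : e v a -> e v b -> a != b ->
  dist e a x <= dist e v x -> dist e v x < dist e b x.
Proof.
move=> ha hb hab hax; rewrite ltnNge; apply/negP => hbx.
have /walkP[p1 [hs1 hp1 hl1]] := dist_walk conn a x.
have /walkP[p2 [hs2 hp2 hl2]] := dist_walk conn x b.
have hq : path e a (p1 ++ p2) by rewrite cat_path hp1 hl1 hp2.
have hl : last a (p1 ++ p2) = b by rewrite last_cat hl1.
have := tree_nbr_path_mem ha hb hab hq hl; rewrite inE mem_cat => /or3P[/eqP hva|hv|hv].
- by move: ha; rewrite hva irr_e.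
- have [n hn hw] := walk_suffix hp1 hv; rewrite hl1 in hw.
  have := leq_ltn_trans (dist_le hw) (leq_trans hn (leq_trans (eq_leq hs1) hax)).
  by rewrite ltnn.
- have hvb : v != last x p2 by rewrite hl2; apply: contraTneq hb => ->; rewrite irr_e.
  have [n hn hw] := walk_prefix hp2 hv hvb.
  have := leq_ltn_trans (dist_le hw) (leq_trans hn (eq_leq hs2)).
  by rewrite !(dist_sym conn sym_e x) => /leq_trans/(_ hbx); rewrite ltnn.
Qed.

Lemma tree_closer_nbr_uniq x v u1 u2 : e v u1 -> e v u2 ->
  dist e u1 x < dist e v x -> dist e u2 x < dist e v x -> u1 = u2.
Proof.
move=> h1 h2 d1 d2; apply/eqP/negPn/negP => hne.
by have := tree_nbrs_farther h1 h2 hne (ltnW d1); rewrite ltnNge ltnW.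
Qed.

Lemma tree_dist_edge_neq u v x : e u v -> dist e u x != dist e v x.
Proof.
move=> huv; apply/negP => /eqP h.
have hux : u != x.
  apply: contraTneq huv => hux; move: h; rewrite hux dist0 => /esym/dist_eq0 <-.
  by rewrite irr_e.
have [u' hu' hd] := dist_step conn hux.
have hne : v != u'.
  apply/eqP => hv; move: hd (dist_gt0 e hux); rewrite -hv -h.
  by case: (dist e u x) => [|n] // /eqP; rewrite eqn_leq ltnn.
have := tree_nbrs_farther (x := x) huv hu' hne; rewrite hd h leqnn => /(_ isT).
by rewrite ltnNge leq_pred.
Qed.

Lemma tree_geodesic_step a b t n :
  dist e a t + dist e t b = dist e a b -> dist e t b = n.+1 ->
  exists2 z, e t z & [/\ dist e z b = n, dist e a z = (dist e a t).+1 &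
                       dist e a z + dist e z b = dist e a b].
Proof.
move=> ht htb.
have htb' : t != b by rewrite -(dist_eq0P e) htb.
have [z hz hzd] := dist_step conn htb'; rewrite htb /= in hzd.
have h1 : dist e a z <= (dist e a t).+1.
  by rewrite !(dist_sym conn sym_e a); apply: (dist_edge_leS conn); rewrite sym_e.
have h2 : dist e a b <= dist e a z + n by rewrite -hzd (dist_tri conn).
have h3 : dist e a z = (dist e a t).+1.
  by apply/eqP; rewrite eqn_leq h1 /=; rewrite -ht htb addnS -addSn leq_add2r in h2.
by exists z => //; split => //; apply/eqP; rewrite hzd eqn_leq h2 andbT h3 -ht htb addSnnS.
Qed.

Lemma tree_geodesic_uniq a b y y' : dist e a y + dist e y b = dist e a b ->
  dist e a y' + dist e y' b = dist e a b -> dist e a y = dist e a y' -> y = y'.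
Proof.
move=> hy hy' hay.
have hyb : dist e y b = dist e y' b.
  by apply/eqP; rewrite -(eqn_add2l (dist e a y)) {2}hay hy hy'.
move: {2}(dist e y b) (erefl (dist e y b)) => n hn.
elim: n y y' hy hy' hay hyb hn => [|n IH] y y' hy hy' hay hyb hn.
  by rewrite (dist_eq0 hn) (dist_eq0 (etrans (esym hyb) hn)).
have [z hz [hzb haz hz']] := tree_geodesic_step hy hn.
have [z' hz2 [hzb' haz' hz'']] := tree_geodesic_step hy' (etrans (esym hyb) hn).
have hzz : z = z' by apply: IH => //; rewrite ?haz ?haz' ?hay ?hzb ?hzb'.
subst z'; apply: (tree_closer_nbr_uniq (x := a) (v := z)); rewrite 1?sym_e //.
  by rewrite !(dist_sym conn sym_e _ a) haz.
by rewrite !(dist_sym conn sym_e _ a) haz'.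
Qed.

Lemma aut_fix_geodesic (s : {perm T}) a b y : is_automorphism e s ->
  s a = a -> s b = b -> dist e a y + dist e y b = dist e a b -> s y = y.
Proof.
move=> hs ha hb hy; apply: (tree_geodesic_uniq (a := a) (b := b)) => //.
- by rewrite -{1}ha -{1}hb !(aut_dist _ _ hs).
- by rewrite -{1}ha (aut_dist _ _ hs).
Qed.

(* The vertex farthest from [a] among those seen from [a] through [w] is a leaf. *)
Lemma exists_leaf_beyond a w : a != w ->
  exists l, dist e a w + dist e w l = dist e a l /\ deg e l <= 1.
Proof.
move=> haw.
pose D v := dist e a v == dist e a w + dist e w v.
have hwD : D w by rewrite /D dist0 addn0.
case: (arg_maxnP (fun v => dist e a v) hwD) => l /eqP hlD hmax.
exists l; split; first by rewrite hlD.
have hnb n : e l n -> dist e n a < dist e l a.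
  move=> hn; rewrite ltn_neqAle eq_sym tree_dist_edge_neq //= !(dist_sym conn sym_e _ a).
  rewrite leqNgt; apply/negP => hgt.
  have h1 : dist e a n <= (dist e a l).+1.
    by rewrite !(dist_sym conn sym_e a); apply: (dist_edge_leS conn); rewrite sym_e.
  have heq : dist e a n = (dist e a l).+1 by apply/eqP; rewrite eqn_leq h1 hgt.
  have hnD : D n.
    rewrite /D eqn_leq (dist_tri conn) /= heq hlD -addnS leq_add2l.
    by rewrite !(dist_sym conn sym_e w); apply: (dist_edge_leS conn); rewrite sym_e.
  by have := hmax n hnD; rewrite /= heq ltnn.
apply/card_le1P => n1; rewrite inE => h1 n2; rewrite !inE.
by apply/idP/eqP => [h2|->//]; apply: (tree_closer_nbr_uniq (x := a) (v := l)); rewrite ?hnb.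
Qed.

End Trees.

Section LargeBasis.
Variables (T : finType) (e : rel T).
Hypothesis tree : is_tree e.

Let sym_e : symmetric e. Proof. by case: tree => [[]]. Qed.
Let irr_e : irreflexive e. Proof. by case: tree => [[]]. Qed.
Let conn : connected_graph e. Proof. by case: tree => _ []. Qed.

Variables (W : {set T}) (m : nat).
Hypotheses (cardW : #|W| = m.+2) (resW : resolving e W).

Lemma aut_fix_basis (s : {perm T}) w : w \in W -> is_automorphism e s ->
  fixes s (W :\ w) -> s w = w -> s = 1%g.
Proof.
move=> hw hs hf hsw; apply: aut_fix_resolving hs resW _ => b hb.
by case: (eqVneq b w) => [->//|hbw]; apply: hf; rewrite in_setD1 hbw hb.
Qed.

Lemma center_of_large_leaf_nbrs p : m.+2 < #|leaf_nbrs e p| ->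
  forall x, x != p -> e p x.
Proof.
move=> hp; have hLW := leaf_nbrs_resolving conn sym_e p resW.
have hsplit := cardsID W (leaf_nbrs e p).
have hWL : W \subset leaf_nbrs e p.
  have hWLW : leaf_nbrs e p :&: W \subset W by exact: subsetIr.
  have hcard : #|W| <= #|leaf_nbrs e p :&: W| by rewrite cardW; lia.
  have := geq_leqif (subset_leqif_card hWLW); rewrite hcard => /esym hsub.
  exact: subset_trans hsub (subsetIl _ _).
have [z hz] : exists z, z \in leaf_nbrs e p :\: W.
  apply/set0Pn; rewrite -card_gt0.
  have : #|leaf_nbrs e p :&: W| <= m.+2 by rewrite -cardW subset_leq_card ?subsetIr.
  lia.
move: hz; rewrite in_setD => /andP[hzW hzL].
have hnbr y : e p y -> y \in leaf_nbrs e p.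
  move=> hpy; case hyW: (y \in W); first exact: (subsetP hWL).
  suff -> : y = z by [].
  apply/eqP/negPn/negP => hyz.
  have /existsP[b /andP[hb hd]] := implyP (forallP (forallP resW y) z) hyz.
  have hbL := subsetP hWL b hb.
  move: (hbL); rewrite inE => /andP[hpb /eqP hdb].
  have hbp : e b p by rewrite sym_e.
  have hyb : y != b by apply: contraFneq hyW => ->.
  have hzb : z != b by apply: contraNneq hzW => ->.
  move: hd; rewrite (dist_leaf conn sym_e hdb hbp hyb) (dist_leaf conn sym_e hdb hbp hzb).
  rewrite !(dist_sym conn sym_e _ p) (dist_edge1 irr_e hpy) dist_edge1 ?eqxx //.
  by move: hzL; rewrite inE => /andP[].
have hS : forall x, x \in p |: [set u | e p u].
  apply: (connected_closed_setT conn (x0 := p)); first by rewrite !inE eqxx.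
  move=> u v; rewrite !inE => /orP[/eqP ->|hpu] h; first by rewrite h orbT.
  have := hnbr u hpu; rewrite inE => /andP[_ /eqP hu1].
  have hup : e u p by rewrite sym_e.
  by rewrite (leaf_nbrE hu1 hup) in h; rewrite h.
by move=> x hxp; have := hS x; rewrite !inE (negbTE hxp).
Qed.

Hypothesis no_dist : forall c : {ffun T -> 'I_m.+2}, ~~ distinguishing e c.

Lemma nontrivial_aut_of_coloring (c : T -> 'I_m.+2) :
  exists2 s : {perm T}, is_automorphism e s & s != 1%g /\ forall x, c (s x) = c x.
Proof.
have := no_dist (finfun c); rewrite /distinguishing negb_forall => /existsP[s].
rewrite negb_imply => /andP[/andP[ha /forallP hc] hs]; exists s => //; split => // x.
by have := hc x; rewrite !ffunE => /eqP.
Qed.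

Section OneVertexOff.
Variable w : T.
Hypothesis hw : w \in W.

Lemma card_basisD1 : #|W :\ w| = m.+1.
Proof. by move: cardW; rewrite (cardsD1 w W) hw add1n => -[]. Qed.

Lemma basisD1_nonempty : exists a, a \in W :\ w.
Proof. by apply/set0Pn; rewrite -card_gt0 card_basisD1. Qed.

Let code := set_code (W :\ w) m.+1.

Let code_inj b x : b \in W :\ w -> code x = code b -> x = b.
Proof. by apply: set_code_inj; rewrite card_basisD1. Qed.

Lemma aut_fixing_basisD1 :
  exists2 r : {perm T}, is_automorphism e r & r != 1%g /\ fixes r (W :\ w).
Proof.
have [s hs [hne hc]] := nontrivial_aut_of_coloring code.
by exists s => //; split => // b hb; apply: code_inj hb (hc b).
Qed.

(* Recolour [r l] with the colour of [a]: a colour-preserving automorphism [t]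
   either moves [a] onto [r l], or fixes [W :\ w] and [r l], and then its
   conjugate by [r] fixes [W :\ w] and [l], which is impossible. *)
Lemma deg_basisD1 a r l : a \in W :\ w -> is_automorphism e r -> fixes r (W :\ w) ->
  r l \notin W :\ w ->
  (forall s, is_automorphism e s -> fixes s (W :\ w) -> s l = l -> s = 1%g) ->
  deg e a = deg e l.
Proof.
move=> ha hr hrf hy hfix; set y := r l in hy.
pose h x := if x == y then code a else code x.
have [t ht [hne hc]] := nontrivial_aut_of_coloring h.
have hay : a != y by apply: contraNneq hy => <-.
have := hc a; rewrite /h (negbTE hay); case: eqP => [hty _|_ /(code_inj ha) hta].
  by rewrite -(aut_deg _ ht) hty /y (aut_deg _ hr).
have htf : fixes t (W :\ w).
  move=> b hb; case: (eqVneq b a) => [->//|hba].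
  have hby : b != y by apply: contraNneq hy => <-.
  have := hc b; rewrite /h (negbTE hby); case: eqP => [_ /(code_inj hb) hab|_].
    by rewrite hab eqxx in hba.
  exact: code_inj.
have hty : t y = y.
  have := hc y; rewrite /h eqxx; case: eqP => [//|_ /(code_inj ha) htya].
  by move: hay; rewrite -(perm_inj (etrans hta (esym htya))) eqxx.
have hconj : (r * t * r^-1)%g = 1%g.
  apply: hfix; first by apply: aut_mul; [apply: aut_mul|apply: aut_inv].
    exact: fixes_conj.
  by rewrite !permM -/y hty permK.
move: hne; suff -> : t = (r^-1 * (r * t * r^-1) * r)%g by rewrite hconj mulg1 mulVg eqxx.
by rewrite !mulgA mulVg mul1g mulgKV.
Qed.

End OneVertexOff.

(* By [deg_basisD1], [w] has the degree of a leaf beyond [w] seen from [a]. *)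
Lemma basis_leaf w : w \in W -> deg e w = 1.
Proof.
move=> hw; have [a ha] := basisD1_nonempty hw.
have haw : a != w by move: ha; rewrite in_setD1 => /andP[].
have [r hr [hrne hrf]] := aut_fixing_basisD1 hw.
have r_fixed x : r x \in W :\ w -> r x = x by move=> /hrf /perm_inj.
have hrw : r w \notin W :\ w.
  by apply/negP => /r_fixed hrw; move: hrne; rewrite (aut_fix_basis hw hr hrf hrw) eqxx.
have d1 : deg e a = deg e w by apply: (deg_basisD1 hw ha hr hrf hrw) => s; apply: aut_fix_basis.
have [l [hl hdl]] := exists_leaf_beyond tree haw.
have hgeo s : is_automorphism e s -> fixes s (W :\ w) -> s l = l -> s w = w.
  by move=> hs hsf hsl; apply: (aut_fix_geodesic tree (a := a) (b := l)) => //; exact: hsf.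
have hrl : r l \notin W :\ w.
  apply/negP => /r_fixed hrl; move: hrne.
  by rewrite (aut_fix_basis hw hr hrf (hgeo r hr hrf hrl)) eqxx.
have d2 : deg e a = deg e l.
  apply: (deg_basisD1 hw ha hr hrf hrl) => s hs hsf hsl.
  exact: aut_fix_basis hw hs hsf (hgeo s hs hsf hsl).
apply/eqP; rewrite eqn_leq -d1 d2 hdl -d2 d1 /=.
by apply: (deg_gt0 conn (y := a)); rewrite eq_sym.
Qed.

(* If some nontrivial automorphism fixes [W :\ w] and the support vertex [q] of
   [w], it moves [w] to a second leaf at [q]; otherwise [deg_basisD1] makes [q]
   a leaf too. *)
Lemma basis_nbr_hub_or_center w q : w \in W -> e w q ->
  q \in hubs e \/ (forall x, x != q -> e q x).
Proof.
move=> hw hwq; have [a ha] := basisD1_nonempty hw.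
have [r hr [hrne hrf]] := aut_fixing_basisD1 hw.
case: (boolP [exists s : {perm T}, [&& is_automorphism e s, s != 1%g,
                [forall b in W :\ w, s b == b] & s q == q]]).
  case/existsP=> s /and4P[hs hsne /forall_inP hsf /eqP hsq]; left.
  have hsf' : fixes s (W :\ w) by move=> b hb; apply/eqP; exact: hsf.
  have hsw : s w != w by apply: contraNneq hsne => /(aut_fix_basis hw hs hsf') ->.
  rewrite inE; apply: leq_trans (_ : #|[set w; s w]| <= _); first by rewrite cards2 eq_sym hsw.
  apply: subset_leq_card; apply/subsetP => u; rewrite !inE => /orP[] /eqP ->.
    by rewrite basis_leaf // eqxx andbT sym_e.
  by rewrite -{1}hsq (aut_edge _ _ hs) (aut_deg _ hs) basis_leaf // eqxx andbT sym_e.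
rewrite negb_exists => /forallP hnone; right.
have hfix s : is_automorphism e s -> fixes s (W :\ w) -> s q = q -> s = 1%g.
  move=> hs hsf hsq; apply/eqP/negPn/negP => hne.
  have := hnone s; rewrite hs hne hsq eqxx /= andbT.
  by move/negP; apply; apply/forall_inP => b /hsf ->.
have hdq : deg e q = 1.
  case hq: (r q \in W :\ w).
    have := hrf _ hq => /perm_inj hrq; rewrite hrq in hq.
    by apply: basis_leaf; move: hq; rewrite in_setD1 => /andP[].
  rewrite -(deg_basisD1 hw ha hr hrf (negbT hq) hfix); apply: basis_leaf.
  by move: ha; rewrite in_setD1 => /andP[].
have hqw : e q w by rewrite sym_e.
have hS : forall x, x \in [set w; q].
  apply: (connected_closed_setT conn (x0 := w)); first by rewrite !inE eqxx.
  move=> u v; rewrite !inE => /orP[] /eqP -> h.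
  + by rewrite (leaf_nbrE (basis_leaf hw) hwq) in h; rewrite h orbT.
  + by rewrite (leaf_nbrE hdq hqw) in h; rewrite h.
by move=> x hxq; have := hS x; rewrite !inE (negbTE hxq) orbF => /eqP ->.
Qed.

Section HubColoring.
Hypothesis nbr_hub : forall w q, w \in W -> e w q -> q \in hubs e.
Hypothesis small : forall p, #|leaf_nbrs e p| <= m.+2.

Definition hub_coloring x : 'I_m.+2 :=
  if x \in hubs e then index_code (hubs e) m.+1 x
  else if [pick p in hubs e | e x p] is Some p then index_code (leaf_nbrs e p) m.+1 x
  else ord0.

Lemma hub_coloring_fixes (s : {perm T}) : is_automorphism e s ->
  (forall x, hub_coloring (s x) = hub_coloring x) -> fixes s W.
Proof.
move=> hs hc.
have hcardQ : #|hubs e| <= m.+2 by rewrite -cardW card_hubs_resolving.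
have hQs p : (s p \in hubs e) = (p \in hubs e).
  by rewrite !inE (aut_card_nbr (P := fun u => deg e u == 1) p hs) // => x; rewrite aut_deg.
have hsQ p : p \in hubs e -> s p = p.
  move=> hp; have := hc p; rewrite /hub_coloring hQs hp.
  by apply: (index_code_inj hcardQ); rewrite ?hQs.
move=> w hw; have hw1 := basis_leaf hw.
have [q hq] : exists q, [set y | e w y] = [set q] by apply/cards1P/eqP.
have hwq : e w q by rewrite -[e w q]in_set hq set11.
have hqQ := nbr_hub hw hwq.
have hsw1 : deg e (s w) = 1 by rewrite (aut_deg _ hs).
have hswq : e (s w) q by rewrite -(hsQ q hqQ) (aut_edge _ _ hs).
have hnotQ x : deg e x = 1 -> x \notin hubs e by move=> hx1; apply/negP => /hub_deg; rewrite hx1.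
have := hc w; rewrite /hub_coloring (negbTE (hnotQ _ hsw1)) (negbTE (hnotQ _ hw1)).
rewrite (pick_hub_of_leaf hsw1 hswq hqQ) (pick_hub_of_leaf hw1 hwq hqQ).
by apply: (index_code_inj (small q)); rewrite inE ?hsw1 ?hw1 eqxx andbT sym_e.
Qed.

Lemma hub_coloring_contra : False.
Proof.
have [s hs [hne hc]] := nontrivial_aut_of_coloring hub_coloring.
by move: hne; rewrite (aut_fix_resolving hs resW (hub_coloring_fixes hs hc)) eqxx.
Qed.

End HubColoring.

Lemma basis_star : exists c, forall x, x != c -> e c x.
Proof.
case: (boolP [exists c, [forall x, (x != c) ==> e c x]]) => [/existsP[c /forallP hc]|].
  by exists c => x; apply/implyP.
rewrite negb_exists => /forallP no_center.
have not_center q : ~ (forall x, x != q -> e q x).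
  by move=> hq; move/negP: (no_center q); apply; apply/forallP => x; apply/implyP/hq.
exfalso; apply: hub_coloring_contra.
- move=> w q hw hwq; case: (basis_nbr_hub_or_center hw hwq) => // /not_center [].
- move=> p; rewrite leqNgt; apply/negP => /center_of_large_leaf_nbrs /not_center [].
Qed.

End LargeBasis.

Section Invariants.
Variables (T : finType) (e : rel T).

Lemma distinguishing_number_le k (c : {ffun T -> 'I_k}) :
  distinguishing e c -> k <= #|T| -> distinguishing_number e <= k.
Proof.
move=> hc hk; rewrite /distinguishing_number.
have := @bigmin_le _ (fun i : 'I_#|T|.+1 => [exists c : {ffun T -> 'I_i}, distinguishing e c])
  (fun i => (i : nat)) #|T| (Ordinal (hk : k < #|T|.+1)); apply.
by apply/existsP; exists c.
Qed.

Lemma distinguishing_number_ge m : m <= #|T| ->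
  (forall k, k < m -> forall c : {ffun T -> 'I_k}, ~~ distinguishing e c) ->
  m <= distinguishing_number e.
Proof.
move=> hm hno; apply: bigmin_ge => // i /existsP[c hc].
by rewrite leqNgt; apply/negP => hi; move: (hno _ hi c); rewrite hc.
Qed.

Lemma metric_dim_le S : resolving e S -> metric_dim e <= #|S|.
Proof. exact: (@bigmin_le _ (resolving e) (fun S : {set T} => #|S|)). Qed.

Lemma metric_dim_ge m : m <= #|T| -> (forall S, resolving e S -> m <= #|S|) ->
  m <= metric_dim e.
Proof. exact: bigmin_ge. Qed.

Lemma resolvingT : resolving e [set: T].
Proof.
apply/forallP => x; apply/forallP => y; apply/implyP => hxy.
by apply/existsP; exists x; rewrite inE /= dist0 eq_sym (dist_eq0P e) eq_sym.
Qed.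

Lemma metric_dim_attained : exists2 S, resolving e S & #|S| = metric_dim e.
Proof.
case: (bigmin_attained (resolving e) (fun S : {set T} => #|S|) #|T|) => [h|[S hS h]].
  by exists [set: T]; [exact: resolvingT | rewrite /metric_dim h cardsT].
by exists S.
Qed.

Lemma metric_dim_leT : metric_dim e <= #|T|.
Proof. by rewrite -cardsT; apply: metric_dim_le; apply: resolvingT. Qed.

Lemma resolving_card_gt0 S : 1 < #|T| -> resolving e S -> 0 < #|S|.
Proof.
move=> /card_gt1P[x [y [_ _ hxy]]] /forallP/(_ x)/forallP/(_ y)/implyP/(_ hxy).
by case/existsP => s /andP[hs _]; apply/card_gt0P; exists s.
Qed.

Lemma resolving_set1 c : #|T| <= 2 -> resolving e [set c].
Proof.
move=> hT; apply/forallP => x; apply/forallP => y; apply/implyP => hxy.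
apply/existsP; exists c; rewrite inE eqxx /=.
case: (eqVneq x c) hxy => [-> hcy|hxc hxy]; first by rewrite dist0 eq_sym (dist_eq0P e) eq_sym.
case: (eqVneq y c) => [->|hyc]; first by rewrite dist0 (dist_eq0P e).
have : 2 < #|T| by apply/card_gt2P; exists x, y, c; split => //; rewrite hxy hyc eq_sym hxc.
by rewrite ltnNge hT.
Qed.

Lemma distinguishing_number_resolving S : resolving e S -> #|S| < #|T| ->
  distinguishing_number e <= #|S|.+1.
Proof.
move=> hS hST; pose c := [ffun x => set_code S #|S| x].
apply: (distinguishing_number_le (c := c)) => //.
apply/forallP => s; apply/implyP => /andP[hs /forallP hc].
rewrite (aut_fix_resolving hs hS) // => x hx.
by apply: (set_code_inj (leqnn _) hx); have := eqP (hc x); rewrite !ffunE.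
Qed.

End Invariants.

Section PathOrStar.
Variables (T : finType) (e : rel T).
Hypotheses (conn : connected_graph e) (sym_e : symmetric e) (irr_e : irreflexive e).

(* Distances to [w] number the vertices, and adjacent vertices get consecutive numbers. *)
Lemma path_iso_of_resolving1 w : resolving e [set w] -> graph_iso e (@path_rel #|T|).
Proof.
move=> hres; pose g x := Ordinal (dist_lt conn x w).
have ginj : injective g.
  move=> x y /(congr1 val) /= h; apply/eqP/negPn/negP => hxy.
  have /existsP[s /andP[hs hd]] := implyP (forallP (forallP hres x) y) hxy.
  by move: hs hd; rewrite inE => /eqP ->; rewrite h eqxx.
exists g; split; first by apply: inj_card_bij ginj _; rewrite card_ord.
move=> x y; rewrite /path_rel /=; apply/idP/idP.
- move=> hxy; have hne : dist e x w != dist e y w.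
    apply/eqP => h; have hg : g x = g y by apply: val_inj.
    by move: hxy; rewrite (ginj _ _ hg) irr_e.
  have h1 : dist e x w <= (dist e y w).+1 by apply: (dist_edge_leS conn).
  have h2 : dist e y w <= (dist e x w).+1 by apply: (dist_edge_leS conn); rewrite sym_e.
  by apply/orP; lia.
- have closer u v : (dist e u w).+1 = dist e v w -> e u v.
    move=> h; have hvw : v != w by rewrite -(dist_eq0P e) -h.
    have [z hz hzd] := dist_step conn hvw.
    have hzu : g z = g u by apply: val_inj; rewrite /= hzd -h.
    by rewrite -(ginj _ _ hzu) sym_e.
  by case/orP => /eqP /closer; rewrite // sym_e.
Qed.

Hypothesis acyc : acyclic_graph e.

Lemma star_iso_of_center c : (forall x, x != c -> e c x) ->
  graph_iso e (@star_rel #|T|.-1).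
Proof.
move=> hc; have hN : #|T|.-1.+1 = #|T| by rewrite prednK //; apply/card_gt0P; exists c.
pose g0 x : 'I_#|T|.-1.+1 := cast_ord (esym hN) (enum_rank x).
have g0inj : injective g0 by move=> x y /cast_ord_inj /enum_rank_inj.
pose t := tperm (g0 c) ord0; pose g x := t (g0 x).
have ginj : injective g by move=> x y /perm_inj /g0inj.
have hg0 x : (g x == ord0) = (x == c).
  by rewrite /g -(tpermL (g0 c) ord0) -/t (inj_eq perm_inj) (inj_eq g0inj).
exists g; split; first by apply: inj_card_bij ginj _; rewrite card_ord hN.
move=> x y; rewrite /star_rel !hg0.
case: (eqVneq x c) => [->|hxc]; case: (eqVneq y c) => [->|hyc] /=.
- by rewrite irr_e.
- exact: hc.
- by rewrite sym_e hc.
apply/negP => hxy.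
have hxy' : x != y by apply: contraTneq hxy => ->; rewrite irr_e.
apply: (negP (acyc (c := [:: c; x; y]) _ _)) => //.
- by rewrite /= !inE negb_or eq_sym hxc eq_sym hyc hxy'.
- by rewrite /= hc // hxy sym_e hc.
Qed.

End PathOrStar.

(* [D = dim + 1] with [dim >= 2] makes the tree a star (of at least three
   vertices, since [dim <= 1] on two vertices); [dim = 1] makes it a path. *)
Lemma path_or_star_of_D_dim (T : finType) (e : rel T) : is_tree e -> 2 <= #|T| ->
  distinguishing_number e = (metric_dim e).+1 ->
  exists n : nat, 2 <= n /\ (graph_iso e (@path_rel n) \/ graph_iso e (@star_rel n)).
Proof.
move=> tree hT hD; case: (tree) => -[sym_e irr_e] [conn acyc].
have [W hW hWk] := metric_dim_attained e.
have := resolving_card_gt0 hT hW; rewrite hWk.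
case hk: (metric_dim e) hWk => [|[|m]] // hWk _.
  move/eqP/cards1P: hWk => [w hw]; rewrite hw in hW.
  by exists #|T|; split => //; left; apply: path_iso_of_resolving1 hW.
have no_dist (c : {ffun T -> 'I_m.+2}) : ~~ distinguishing e c.
  apply/negP => /distinguishing_number_le; rewrite hD hk -hk metric_dim_leT.
  by rewrite hk ltnn => /(_ isT).
have [c hc] := basis_star tree hWk hW no_dist.
have hT2 : 2 < #|T|.
  by rewrite ltnNge; apply/negP => /(resolving_set1 e c)/metric_dim_le; rewrite hk cards1.
exists #|T|.-1; split; first by rewrite -ltnS prednK // ltnW.
by right; apply: star_iso_of_center hc.
Qed.

Section PathInvariants.
Variables (T : finType) (e : rel T) (n : nat) (g : T -> 'I_n.+2) (gi : 'I_n.+2 -> T).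
Hypotheses (ggi : cancel g gi) (gig : cancel gi g).
Hypothesis ge : forall x y, e x y = path_rel (g x) (g y).

Let end0 := gi ord0.
Let cardT : #|T| = n.+2.
Proof. by rewrite (bij_eq_card (f := g)) ?card_ord //; exists gi. Qed.

Lemma path_walk_lb x y k : walk_of_len e x y k -> g x <= g y + k.
Proof.
case/walkP=> p [<- hp <-]; elim: p x hp => [|z p IH] x /=; first by rewrite addn0.
case/andP=> hxz hp; have := IH z hp; rewrite ge /path_rel in hxz.
by case/orP: hxz => /eqP h; lia.
Qed.

Lemma path_walk_to_end i (hi : i < n.+2) : walk_of_len e (gi (inord i)) end0 i.
Proof.
elim: i hi => [|i IH] hi.
  have -> : (inord 0 : 'I_n.+2) = ord0 by apply: val_inj; rewrite /= inordK.
  exact: walk_nil.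
apply: (walk_cons (z := gi (inord i))); last by apply: IH; apply: ltnW.
by rewrite ge !gig /path_rel !inordK // ?eqxx ?orbT //; apply: ltnW.
Qed.

Lemma path_dist_end x : dist e x end0 = g x.
Proof.
have hw : walk_of_len e x end0 (g x).
  by rewrite -{1}(ggi x) -{1}(inord_val (g x)); apply: path_walk_to_end.
apply/eqP; rewrite eqn_leq (dist_le hw) /=.
have := path_walk_lb (dist_walk_of_lt hw _); rewrite cardT ltn_ord /end0 gig add0n; exact.
Qed.

Lemma path_resolving_end : resolving e [set end0].
Proof.
apply/forallP => x; apply/forallP => y; apply/implyP => hxy.
apply/existsP; exists end0; rewrite inE eqxx /= !path_dist_end.
by apply: contra hxy => /eqP /val_inj h; rewrite -(ggi x) h ggi.
Qed.

Lemma path_metric_dim : metric_dim e = 1.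
Proof.
apply/eqP; rewrite eqn_leq; apply/andP; split.
  by rewrite -(cards1 end0); apply: metric_dim_le; exact: path_resolving_end.
by apply: metric_dim_ge => [|S]; [rewrite cardT | apply: resolving_card_gt0; rewrite cardT].
Qed.

(* The reflection [i |-> n.+1 - i] preserves any one-colour colouring. *)
Lemma path_distinguishing_number : distinguishing_number e = 2.
Proof.
apply/eqP; rewrite eqn_leq; apply/andP; split.
  by have := distinguishing_number_resolving path_resolving_end; rewrite cards1 cardT; apply.
apply: distinguishing_number_ge; first by rewrite cardT.
move=> [|[|k]] // _ c; first by case: (c end0).
have rinj : injective (fun x => gi (rev_ord (g x))).
  by move=> x y /(can_inj gig) /rev_ord_inj /(can_inj ggi).
pose r := perm rinj.
rewrite /distinguishing negb_forall; apply/existsP; exists r; rewrite negb_imply.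
apply/andP; split.
  apply/andP; split; last by apply/forallP => x; rewrite [c (r x)]ord1 [c x]ord1.
  apply/forallP => x; apply/forallP => y; apply/eqP.
  rewrite !permE !ge !gig /path_rel /=.
  have := ltn_ord (g x); have := ltn_ord (g y).
  move: (nat_of_ord (g x)) (nat_of_ord (g y)) => a b hb ha.
  by apply/idP/idP => /orP[] /eqP h; apply/orP; lia.
apply/eqP => /permP /(_ end0); rewrite permE perm1 /end0 gig => /(congr1 g).
by rewrite !gig => /(congr1 val) /=; rewrite subn1.
Qed.

End PathInvariants.

Lemma path_D_dim (T : finType) (e : rel T) n : graph_iso e (@path_rel n.+2) ->
  distinguishing_number e = (metric_dim e).+1.
Proof.
case=> g [[gi ggi gig] ge].
by rewrite (path_distinguishing_number ggi gig ge) (path_metric_dim ggi gig ge).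
Qed.

Section StarInvariants.
Variables (T : finType) (e : rel T) (n : nat) (c : T).
Hypotheses (n_ge2 : 2 <= n) (cardT : #|T| = n.+1).
Hypothesis ce : forall x y, e x y = ((x == c) != (y == c)).

Let n_gt0 : 0 < n. Proof. exact: leq_trans n_ge2. Qed.
Let leaves := [set~ c].
Let card_leaves : #|leaves| = n. Proof. by rewrite cardsC1 cardT. Qed.

Lemma star_dist_center x : x != c -> dist e x c = 1.
Proof.
move=> hx; have hxc : e x c by rewrite ce eqxx (negbTE hx).
by apply/eqP; rewrite eqn_leq (dist_le (walk_edge hxc)) /= dist_gt0.
Qed.

Lemma star_dist_from_center x : x != c -> dist e c x = 1.
Proof.
move=> hx; have hcx : e c x by rewrite ce eqxx eq_sym (negbTE hx).
by apply/eqP; rewrite eqn_leq (dist_le (walk_edge hcx)) /= dist_gt0 // eq_sym.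
Qed.

Lemma star_dist_leaves x y : x != c -> y != c -> x != y -> dist e x y = 2.
Proof.
move=> hx hy hxy.
have hw : walk_of_len e x y 2.
  apply: (walk_cons (z := c)); first by rewrite ce eqxx (negbTE hx).
  by apply: walk_edge; rewrite ce eqxx (negbTE hy).
apply/eqP; rewrite eqn_leq (dist_le hw) /=.
case hd: (dist e x y) => [|[|//]].
  by move/dist_eq0: hd => h; rewrite h eqxx in hxy.
have := dist_walk_of_lt hw; rewrite cardT hd => /(_ (leq_ltn_trans n_ge2 (ltnSn _))).
case/walkP => [[|z [|z' p]]] [] //= _ /andP[hxz _] hz.
by move: hxz; rewrite hz ce (negbTE hx) (negbTE hy).
Qed.

Lemma star_aut (s : {perm T}) : s c = c -> is_automorphism e s.
Proof.
move=> hs; have h z : (s z == c) = (z == c) by rewrite -{1}hs (inj_eq perm_inj).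
by apply/forallP => x; apply/forallP => y; rewrite !ce !h.
Qed.

(* All leaves but one: the remaining leaf is at distance 2 from each of them,
   the centre at distance 1. *)
Lemma star_resolving : exists2 S, resolving e S & #|S| = n.-1.
Proof.
have /card_gt1P[l1 [l2 [h1 h2 h12]]] : 1 < #|leaves| by rewrite card_leaves.
move: h1 h2; rewrite !inE => h1 h2.
exists (leaves :\ l1); last by have := cardsD1 l1 leaves; rewrite card_leaves !inE h1 add1n => ->.
apply/forallP => x; apply/forallP => y; apply/implyP => hxy; apply/existsP.
case hxS: (x \in leaves :\ l1).
  by exists x; rewrite hxS dist0 eq_sym /= (dist_eq0P e) eq_sym.
case hyS: (y \in leaves :\ l1).
  by exists y; rewrite hyS dist0 /= (dist_eq0P e).
exists l2; rewrite !inE eq_sym h12 h2 /=.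
move: hxS hyS; rewrite !inE => /negbT hx /negbT hy.
rewrite negb_and !negbK in hx; rewrite negb_and !negbK in hy.
have d12 := star_dist_leaves h1 h2 h12; have dc2 := star_dist_from_center h2.
by case/orP: hx => /eqP hx; case/orP: hy => /eqP hy; move: hxy;
  rewrite hx hy ?eqxx ?d12 ?dc2.
Qed.

(* Two leaves outside a resolving set would be twins. *)
Lemma star_metric_dim : metric_dim e = n.-1.
Proof.
have [S hres hS] := star_resolving.
apply/eqP; rewrite eqn_leq -{1}hS metric_dim_le //=.
apply: metric_dim_ge; first by rewrite cardT; lia.
move=> S' hS'; rewrite leqNgt; apply/negP => hlt.
have hc2 : 1 < #|leaves :\: S'|.
  have := cardsID S' leaves; rewrite card_leaves.
  have : #|leaves :&: S'| <= #|S'| by apply: subset_leq_card; apply: subsetIr.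
  lia.
case/card_gt1P: hc2 => u [v [hu hv huv]].
move: hu hv; rewrite !in_setD !inE => /andP[huS huc] /andP[hvS hvc].
have /existsP[s /andP[hs hd]] := implyP (forallP (forallP hS' u) v) huv.
have hsu : s != u by apply: contraNneq huS => <-.
have hsv : s != v by apply: contraNneq hvS => <-.
move: hd; case: (eqVneq s c) => [->|hsc]; first by rewrite !star_dist_center.
by rewrite !star_dist_leaves // eq_sym.
Qed.

(* With fewer than [n] colours two leaves share a colour; swap them. *)
Lemma star_distinguishing_number : distinguishing_number e = n.
Proof.
apply/eqP; rewrite eqn_leq; apply/andP; split.
  have [S hres hS] := star_resolving.
  by have := distinguishing_number_resolving hres; rewrite hS cardT prednK //; apply.
apply: distinguishing_number_ge; first by rewrite cardT.
move=> k hk col.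
case: (boolP [forall u in leaves, forall v in leaves, (col u == col v) ==> (u == v)]).
  move=> /forall_inP hinj; have : #|leaves| <= #|'I_k|.
    apply: (@leq_card_in _ _ col) => u v hu hv h.
    by apply/eqP; move/forall_inP/(_ v hv)/implyP: (hinj u hu); apply; apply/eqP.
  by rewrite card_ord card_leaves leqNgt hk.
rewrite negb_forall_in => /exists_inP[u hu]; rewrite negb_forall_in => /exists_inP[v hv].
rewrite negb_imply => /andP[/eqP hcol huv]; move: hu hv; rewrite !inE => hu hv.
rewrite /distinguishing negb_forall; apply/existsP; exists (tperm u v); rewrite negb_imply.
apply/andP; split.
  apply/andP; split; first by apply: star_aut; rewrite tpermD // eq_sym.
  by apply/forallP => x; apply/eqP; case: tpermP => [->|->|].
by apply/eqP => /permP /(_ u); rewrite tpermL perm1 => h; rewrite h eqxx in huv.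
Qed.

Lemma star_D_dim : distinguishing_number e = (metric_dim e).+1.
Proof. by rewrite star_distinguishing_number star_metric_dim prednK. Qed.

End StarInvariants.

Lemma star_iso_D_dim (T : finType) (e : rel T) n : 2 <= n ->
  graph_iso e (@star_rel n) -> distinguishing_number e = (metric_dim e).+1.
Proof.
move=> hn [g [[gi ggi gig] ge]].
have cardT : #|T| = n.+1 by rewrite (bij_eq_card (f := g)) ?card_ord //; exists gi.
apply: (star_D_dim hn cardT (c := gi ord0)) => x y.
have hc z : (g z == ord0) = (z == gi ord0).
  by rewrite -{1}(gig ord0) (inj_eq (can_inj ggi)).
by rewrite ge /star_rel !hc.
Qed.

Theorem theorem3p2 (T : finType) (e : rel T) :
  is_tree e -> 2 <= #|T| ->
  (distinguishing_number e = (metric_dim e).+1 <->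
   exists n : nat, 2 <= n /\ (graph_iso e (@path_rel n) \/ graph_iso e (@star_rel n))).
Proof.
move=> tree hT; split; first exact: path_or_star_of_D_dim.
case=> n [hn [hpath|hstar]]; last exact: star_iso_D_dim hn hstar.
by case: n hn hpath => [|[|n]] // _; apply: path_D_dim.
Qed.
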